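(* The competitive ratio of every (randomized) online algorithm solving the generalized $k$-server problem in uniform metrics is at least $\Omega(k)$: there is an absolute constant $c>0$ such that for every $k\ge 1$, every choice of uniform metric spaces $M_1,\dots,M_k$ (each with at least two points) and initial server positions, no randomized online algorithm is $\beta$-competitive (against an oblivious adversary) with $\beta< c k$.
   Context: Generalized $k$-server problem in uniform metrics: given uniform metric spaces $M_1,\dots,M_k$, where $M_i$ has $n_i\ge 2$ points at pairwise distance $1$, server $s_i$ starts at a fixed point of $M_i$ and always stays in $M_i$. Requests arrive online as $k$-tuples $(r_1,\dots,r_k)\in\prod_i M_i$; to serve a request an algorithm moves servers so that $s_i$ is at $r_i$ for at least one $i$, before seeing the next request. The cost is the total distance traveled by all servers. A randomized online algorithm $\mathrm{ALG}$ is $\beta$-competitive if there is a constant $\gamma$ (possibly depending on $k$ but not on the request sequence) such that for every input $I$, $\mathbf{E}[\mathrm{ALG}(I)]\le \beta\cdot\mathrm{OPT}(I)+\gamma$, where $\mathrm{OPT}(I)$ is the optimal offline cost; the competitive ratio is the infimum of such $\beta$. *)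

From HB Require Import structures.
From mathcomp Require Import all_boot all_order all_algebra.
From mathcomp Require Import classical_sets boolp reals ereal measure lebesgue_measure lebesgue_integral probability.
Set Implicit Arguments. Unset Strict Implicit. Unset Printing Implicit Defensive.
Import Order.TTheory GRing.Theory Num.Theory.
Local Open Scope ring_scope.
Local Open Scope classical_set_scope.

(* Generalized k-server in uniform metrics.  Metric space M_i is 'I_(n i)
   (n i points, pairwise distance 1).  A configuration (and a request) is a
   k-tuple (p_i)_i with p_i in M_i. *)
Definition cfg (k : nat) (n : 'I_k -> nat) := forall i : 'I_k, 'I_(n i).

Definition dist (k : nat) (n : 'I_k -> nat) (c c' : cfg n) : nat := (\sum_(i < k) (c i != c' i))%N.

Definition serves (k : nat) (n : 'I_k -> nat) (c r : cfg n) : bool := [exists i : 'I_k, c i == r i].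

(* Deterministic online algorithm: the configuration after serving the
   requests r_1..r_t is a function of (r_1..r_t) only. *)
Definition online_alg (k : nat) (n : 'I_k -> nat) := seq (cfg n) -> cfg (k:=k) n.

Definition valid_alg (k : nat) (n : 'I_k -> nat) (A : online_alg n) : Prop :=
  forall (s : seq (cfg n)) (r : cfg n), serves (A (rcons s r)) r.

Definition alg_pos (k : nat) (n : 'I_k -> nat) (start : cfg n) (A : online_alg (k:=k) n)
  (I : seq (cfg n)) (t : nat) : cfg n :=
  if t == 0%N then start else A (take t I).

Definition alg_cost (k : nat) (n : 'I_k -> nat) (start : cfg n) (A : online_alg (k:=k) n)
  (I : seq (cfg n)) : nat :=
  (\sum_(t < size I) dist (alg_pos start A I t) (alg_pos start A I t.+1))%N.

Definition offline_feasible (k : nat) (n : 'I_k -> nat) (start : cfg (k:=k) n) (I s : seq (cfg n)) : Prop :=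
  size s = size I /\
  forall t, (t < size I)%N -> serves (nth start s t) (nth start I t).

Definition offline_cost (k : nat) (n : 'I_k -> nat) (start : cfg (k:=k) n) (s : seq (cfg n)) : nat :=
  (\sum_(t < size s) dist (nth start (start :: s) t) (nth start s t))%N.

Definition OPT (R : realType) (k : nat) (n : 'I_k -> nat) (start : cfg (k:=k) n) (I : seq (cfg n)) : R :=
  inf [set x : R | exists s, offline_feasible start I s /\
                             x = (offline_cost start s)%:R].

(* A randomized online algorithm: a probability space (Omega, P) and, for
   each random outcome w, a valid deterministic online algorithm A w; the
   cost on every fixed input is a measurable function of w. *)
Definition randomized_alg (R : realType) (d : measure_display)
  (Omega : measurableType d) (P : probability Omega R) (k : nat) (n : 'I_k -> nat)
  (A : Omega -> online_alg (k:=k) n) (start : cfg n) : Prop :=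
  (forall w, valid_alg (A w)) /\
  forall I : seq (cfg n),
    measurable_fun setT (fun w => ((alg_cost start (A w) I)%:R : R)).

(* beta-competitive (against an oblivious adversary):
   E[ALG(I)] <= beta * OPT(I) + gamma for all inputs I. *)
Definition competitive (R : realType) (d : measure_display)
  (Omega : measurableType d) (P : probability Omega R) (k : nat) (n : 'I_k -> nat)
  (A : Omega -> online_alg (k:=k) n) (start : cfg n) (beta : R) : Prop :=
  exists gamma : R, forall I : seq (cfg n),
    (\int[P]_w ((alg_cost start (A w) I)%:R : R)%:E
       <= (beta * OPT R start I + gamma)%:E)%E.

(* Yao's principle: it suffices to exhibit a random input on which every
   deterministic online algorithm pays, in expectation, Omega(k) times the
   offline optimum.  Fix a binary code enc : {0,1}^b -> {0,1}^k of minimum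
   distance D, with b * D = Omega(k^2) by the Gilbert-Varshamov bound, and
   read words as configurations in the first two points of each M_i.  Random
   bits are revealed in phases of b.  After each bit, D sweeps of requests
   (every word whose antipode is not an admissible codeword) force an algorithm
   either to pay D or to reach the codeword of a message consistent with the
   bits of the phase revealed so far.  The admissible codewords for the two
   values of the bit are at distance >= D, so an online algorithm pays D / 2
   per bit on average, i.e. b * D / 2 per phase, while the offline optimum
   sits on the phase's codeword and pays at most k per phase.  Hence
   beta >= b * D / (2 * k) = Omega(k). *)

From mathcomp Require Import all_boot all_order all_algebra.
From mathcomp Require Import zify lra boolp.
Set Implicit Arguments. Unset Strict Implicit. Unset Printing Implicit Defensive.
Import Order.TTheory GRing.Theory Num.Theory.

Section Hamming.
Variable k : nat.
Local Notation word := {ffun 'I_k -> bool}.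

Definition hamming (x y : word) : nat := \sum_(i < k) (x i != y i).

Lemma hammingC x y : hamming x y = hamming y x.
Proof. by apply: eq_bigr => i _; rewrite eq_sym. Qed.

Lemma hammingxx x : hamming x x = 0.
Proof. by rewrite /hamming big1 // => i _; rewrite eqxx. Qed.

Definition hamming_ball (s : word) (D : nat) : {set word} := [set x | hamming x s < D].

(* Weighting each word by 16 ^ (number of agreements with s) gives total mass
   17 ^ k, while every word of the ball weighs at least 16 ^ (k - D). *)
Lemma card_hamming_ball s D : D <= k -> #|hamming_ball s D| * 16 ^ (k - D) <= 17 ^ k.
Proof.
move=> leDk.
have weight_sum : \sum_(x : word) \prod_(i < k) (if x i == s i then 16 else 1) = 17 ^ k.
  rewrite -(bigA_distr_bigA (fun i (c : bool) => if c == s i then 16 else 1)) /=.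
  rewrite (eq_bigr (fun _ => 17)) ?prod_nat_const ?card_ord // => i _.
  by rewrite big_bool; case: (s i).
have weightE (x : word) : \prod_(i < k) (if x i == s i then 16 else 1) = 16 ^ (k - hamming x s).
  have agree_count : \sum_(i < k) (x i == s i) = k - hamming x s.
    rewrite -[X in X - _]card_ord -sum1_card /hamming.
    rewrite -(eq_bigr _ (fun i _ => addn_negb (x i != s i))).
    by rewrite big_split /= addnK; apply: eq_bigr => i _; rewrite negbK.
  by rewrite -agree_count expn_sum; apply: eq_bigr => i _; case: (_ == _).
rewrite -weight_sum -sum1_card big_distrl /= [X in _ <= X](bigID (mem (hamming_ball s D))) /=.
apply: leq_trans (leq_addr _ _); apply: leq_sum => x; rewrite inE mul1n weightE => lt_xs.
by rewrite leq_pexp2l // leq_sub2l // ltnW.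
Qed.

Definition separated (D : nat) (S : {set word}) : bool :=
  [forall x in S, forall y in S, (x != y) ==> (D <= hamming x y)].

Lemma maximal_separated_covers D (S : {set word}) : 0 < D ->
  separated D S -> (forall S', separated D S' -> #|S'| <= #|S|) ->
  forall x, exists2 s, s \in S & x \in hamming_ball s D.
Proof.
move=> D_gt0 sepS maxS x; apply/exists_inP; apply: contraT => far.
have {}far s : s \in S -> D <= hamming x s.
  by move=> sS; rewrite leqNgt; apply: contra far => xs; apply/exists_inP; exists s; rewrite ?inE.
have xS : x \notin S by apply: contraL D_gt0 => /far; rewrite hammingxx leqn0 => /eqP ->.
suff /maxS : separated D (x |: S) by rewrite cardsU1 xS ltnn.
apply/forall_inP => y; rewrite in_setU1 => y_xS; apply/forall_inP => z; rewrite in_setU1 => z_xS.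
apply/implyP; case/orP: y_xS => [/eqP->|yS]; case/orP: z_xS => [/eqP->|zS].
- by rewrite eqxx.
- by move=> _; apply: far.
- by move=> _; rewrite hammingC; apply: far.
- by move: sepS => /forall_inP/(_ y yS)/forall_inP/(_ z zS)/implyP.
Qed.

Lemma large_separated_set D : 0 < D -> D <= k ->
  exists2 S : {set word}, separated D S & 2 ^ k * 16 ^ (k - D) <= #|S| * 17 ^ k.
Proof.
move=> D_gt0 leDk.
have sep0 : separated D set0 by apply/forall_inP => x; rewrite inE.
have [S sepS maxS] := arg_maxnP (fun S : {set word} => #|S|) sep0.
exists S => //; have covS := maximal_separated_covers D_gt0 sepS maxS.
have <- : #|{: word}| = 2 ^ k by rewrite card_ffun card_bool card_ord.
apply: (@leq_trans ((\sum_(s in S) #|hamming_ball s D|) * 16 ^ (k - D))).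
  rewrite leq_mul2r -sum1_card; apply/orP; right.
  under [X in _ <= X]eq_bigr => s _ do rewrite -sum1_card big_mkcond.
  rewrite exchange_big /=; apply: leq_sum => x _.
  by have [s sS xs] := covS x; rewrite (bigD1 s) //= xs.
rewrite big_distrl /= -sum_nat_const; apply: leq_sum => s _.
exact: card_hamming_ball.
Qed.

Definition min_distance_ge (a D : nat) (enc : {ffun 'I_a -> bool} -> word) : Prop :=
  forall v v', v != v' -> D <= hamming (enc v) (enc v').

Lemma gilbert_varshamov a D : 0 < D -> D <= k -> 2 ^ a * 17 ^ k <= 2 ^ k * 16 ^ (k - D) ->
  exists enc : {ffun 'I_a -> bool} -> word, min_distance_ge D enc.
Proof.
move=> D_gt0 leDk vol.
have [S sepS largeS] := large_separated_set D_gt0 leDk.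
have leaS : #|{: {ffun 'I_a -> bool}}| <= #|S|.
  rewrite card_ffun card_bool card_ord -(@leq_pmul2r (17 ^ k)) ?expn_gt0 //.
  exact: leq_trans vol largeS.
pose x0 : word := [ffun=> false].
have rank_lt (v : {ffun 'I_a -> bool}) : enum_rank v < size (enum S).
  by rewrite -cardE; apply: leq_trans leaS.
exists (fun v => nth x0 (enum S) (enum_rank v)) => v v' neq_vv'.
have inS (u : {ffun 'I_a -> bool}) : nth x0 (enum S) (enum_rank u) \in S.
  by rewrite -mem_enum mem_nth.
move: sepS => /forall_inP/(_ _ (inS v))/forall_inP/(_ _ (inS v'))/implyP; apply.
by rewrite nth_uniq ?rank_lt ?enum_uniq // (inj_eq val_inj) (inj_eq enum_rank_inj).
Qed.

End Hamming.

Lemma leq_expn2r m n e : m <= n -> m ^ e <= n ^ e.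
Proof. by case: e => // e le_mn; rewrite leq_exp2r. Qed.

Lemma gilbert_varshamov_volume a k : 32 * a <= k -> 2 ^ a * 17 ^ k <= 2 ^ k * 16 ^ (k - a).
Proof.
move=> le32a_k; have le_ak : a <= k by lia.
have lhsE : 2 ^ a * 17 ^ k * 16 ^ a = 32 ^ a * 17 ^ k by rewrite mulnAC -expnMn.
have rhsE : 2 ^ k * 16 ^ (k - a) * 16 ^ a = 32 ^ k by rewrite -mulnA -expnD subnK // -expnMn.
rewrite -(@leq_pmul2r (16 ^ a)) ?expn_gt0 // lhsE rhsE.
rewrite -(subnKC le32a_k) (expnD 17) (expnD 32) mulnA leq_mul ?leq_expn2r //.
rewrite (expnM 17) (expnM 32) -expnMn; apply: leq_expn2r.
(* [32 ^ 32] is too large to evaluate; compare through [(2 * 17 ^ 2) ^ 16]. *)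
apply: (@leq_trans ((2 * 17 ^ 2) ^ 16)); last by rewrite (expnM 32 2 16); apply: leq_expn2r.
by rewrite expnMn -expnM; apply: leq_mul (leqnn _); apply: (@leq_pexp2l 2 5).
Qed.

(* The disjunct [(1 < D) || (b == 1)] keeps the codewords that remain admissible
   during a phase pairwise non-adjacent, which the sweeps need. *)
Lemma good_code_exists k : 0 < k ->
  exists b D (enc : {ffun 'I_b -> bool} -> {ffun 'I_k -> bool}),
    [/\ 0 < b, (1 < D) || (b == 1), min_distance_ge D enc & k * k <= 2304 * (b * D)].
Proof.
move=> k_gt0; have [lt_k64|le64k] := ltnP k 64.
  exists 1, k, (fun v => [ffun=> v ord0]); split; rewrite ?orbT //; last first.
    by rewrite mul1n leq_mul //; lia.
  move=> v v' neq_vv'; have neq_v0 : v ord0 != v' ord0.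
    by apply: contra neq_vv' => /eqP eq_v0; apply/eqP/ffunP => j; rewrite (ord1 j).
  by rewrite /hamming (eq_bigr (fun _ => 1)) ?sum1_card ?card_ord // => i _; rewrite !ffunE neq_v0.
pose a := k %/ 32; have [le32a_k a_gt1 le_k48a] : [/\ 32 * a <= k, 1 < a & k <= 48 * a].
  by have := divn_eq k 32; have := ltn_pmod k (isT : 0 < 32); rewrite -/a; split; lia.
have le_ak : a <= k by apply: leq_trans le32a_k; apply: leq_pmull.
have [enc sep] := gilbert_varshamov (ltnW a_gt1) le_ak (gilbert_varshamov_volume le32a_k).
exists a, a, enc; split; rewrite ?a_gt1 ?(ltnW a_gt1) //.
by apply: leq_trans (leq_mul le_k48a le_k48a) _; rewrite mulnACA.
Qed.

Section Configurations.
Variables (k : nat) (n : 'I_k -> nat).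
Implicit Types c r : cfg n.

Lemma distC c c' : dist c c' = dist c' c.
Proof. by apply: eq_bigr => i _; rewrite eq_sym. Qed.

Lemma distxx c : dist c c = 0.
Proof. by rewrite /dist big1 // => i _; rewrite eqxx. Qed.

Lemma dist_triangle c1 c2 c3 : dist c1 c3 <= dist c1 c2 + dist c2 c3.
Proof.
rewrite /dist -big_split /=; apply: leq_sum => i _.
by case: (c1 i =P c2 i) => [->|_]; rewrite ?add0n // add1n; case: (_ != _).
Qed.

Lemma dist_le_k c c' : dist c c' <= k.
Proof.
by rewrite -[X in _ <= X]card_ord -sum1_card; apply: leq_sum => i _; apply: leq_b1.
Qed.

Lemma dist_gt0_serves c c' r : ~~ serves c r -> serves c' r -> 0 < dist c c'.
Proof.
rewrite /serves negb_exists => /forallP miss /existsP [i /eqP hit].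
by rewrite /dist (bigD1 i) //= hit (miss i).
Qed.

Definition walk_cost (q : nat -> cfg n) (s m : nat) : nat :=
  \sum_(i < m) dist (q (s + i)) (q (s + i).+1).

Lemma walk_costD q s m1 m2 : walk_cost q s (m1 + m2) = walk_cost q s m1 + walk_cost q (s + m1) m2.
Proof.
by rewrite /walk_cost big_split_ord; congr (_ + _); apply: eq_bigr => i _; rewrite addnA.
Qed.

Lemma dist_le_walk_cost q s m : dist (q s) (q (s + m)) <= walk_cost q s m.
Proof.
elim: m => [|m IHm]; first by rewrite addn0 distxx.
rewrite -addn1 walk_costD (leq_trans (dist_triangle _ (q (s + m)) _)) // leq_add //.
by rewrite /walk_cost big_ord1 addn0 addn1 addnS.
Qed.

Lemma leq_walk_cost q s m1 m2 : m1 <= m2 -> walk_cost q s m1 <= walk_cost q s m2.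
Proof. by move/subnKC <-; rewrite walk_costD leq_addr. Qed.

(* Each pass through [sweep] costs at least 1 unless the walk already sits at a
   [safe] configuration, and once there the distance travelled is a lower bound. *)
Lemma repeated_sweep_cost (safe : cfg n -> Prop) (sweep : seq (cfg n)) c0 L q s :
  (forall c, ~ safe c -> exists2 r, r \in sweep & ~~ serves c r) ->
  (forall i, i < size (flatten (nseq L sweep)) ->
     serves (q (s + i).+1) (nth c0 (flatten (nseq L sweep)) i)) ->
  L <= walk_cost q s (size (flatten (nseq L sweep))) \/
  exists2 a, safe a & dist (q s) a <= walk_cost q s (size (flatten (nseq L sweep))).
Proof.
move=> missed; elim: L s => [|L IHL] s serve_all; first by left.
have [safe_s|unsafe_s] := pselect (safe (q s)).
  by right; exists (q s); rewrite ?distxx.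
have [r r_in miss_r] := missed _ unsafe_s.
have passS : flatten (nseq L.+1 sweep) = sweep ++ flatten (nseq L sweep) by [].
rewrite passS in serve_all *; rewrite size_cat walk_costD.
have serve_rest i : i < size (flatten (nseq L sweep)) ->
    serves (q (s + size sweep + i).+1) (nth c0 (flatten (nseq L sweep)) i).
  move=> lt_i; have := serve_all (size sweep + i).
  by rewrite size_cat ltn_add2l nth_cat [size sweep + i < _]ltnNge leq_addr addKn addnA; apply.
have pass_cost : 0 < walk_cost q s (size sweep).
  have lt_r : index r sweep < size sweep by rewrite index_mem.
  apply: leq_trans (leq_walk_cost q s lt_r); apply: leq_trans (dist_le_walk_cost _ _ _).
  apply: dist_gt0_serves miss_r _; rewrite addnS.
  have := serve_all (index r sweep); rewrite nth_cat lt_r nth_index //.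
  by apply; rewrite size_cat ltn_addr.
case: (IHL _ serve_rest) => [le_L|[a safe_a le_a]]; first by left; rewrite -add1n leq_add.
right; exists a => //; apply: leq_trans (dist_triangle _ (q (s + size sweep)) _) _.
by rewrite leq_add // dist_le_walk_cost.
Qed.

End Configurations.

Lemma take_cat_le (T : Type) (s s' : seq T) j : j <= size s -> take j (s ++ s') = take j s.
Proof.
rewrite take_cat leq_eqVlt => /predU1P [->|->] //.
by rewrite ltnn subnn take0 cats0 take_size.
Qed.

Lemma alg_pos_cat k (n : 'I_k -> nat) (start : cfg n) (A : online_alg n) I J t :
  t <= size I -> alg_pos start A (I ++ J) t = alg_pos start A I t.
Proof. by rewrite /alg_pos; case: eqP => // _ /take_cat_le ->. Qed.

Lemma alg_cost_cat k (n : 'I_k -> nat) (start : cfg n) (A : online_alg n) I J :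
  alg_cost start A (I ++ J) =
  alg_cost start A I + walk_cost (alg_pos start A (I ++ J)) (size I) (size J).
Proof.
rewrite /alg_cost size_cat big_split_ord /=; congr (_ + _); apply: eq_bigr => i _.
by rewrite !alg_pos_cat // ltnW.
Qed.

Section WordConfigurations.
Variables (k : nat) (n : 'I_k -> nat) (two_le_n : forall i, 2 <= n i).
Local Notation word := {ffun 'I_k -> bool}.

Definition cfg_of_word (y : word) : cfg n :=
  fun i => Ordinal (leq_ltn_trans (leq_b1 (y i)) (two_le_n i)).

Lemma dist_cfg_of_word y y' : dist (cfg_of_word y) (cfg_of_word y') = hamming y y'.
Proof. by apply: eq_bigr => i _; rewrite -val_eqE /=; case: (y i); case: (y' i). Qed.

Definition flip (y : word) : word := [ffun i => ~~ y i].

(* Among binary configurations, the request [cfg_of_word (flip y)] is missed by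
   [cfg_of_word y] only. *)
Definition sweep (W : {set word}) : seq (cfg n) := [seq cfg_of_word (flip y) | y <- enum (~: W)].

Lemma sweep_missed (W : {set word}) : {in W &, forall y y', hamming y y' != 1} ->
  forall c, ~ (exists2 y, y \in W & c = cfg_of_word y) ->
  exists2 r, r \in sweep W & ~~ serves c r.
Proof.
move=> no_adjacent c not_word.
have missed (y : word) : (forall i, (c i : nat) != ~~ y i) -> y \notin W ->
    exists2 r, r \in sweep W & ~~ serves c r.
  move=> avoid yW; exists (cfg_of_word (flip y)); first by apply: map_f; rewrite mem_enum inE.
  by rewrite /serves negb_exists; apply/forallP => i; rewrite -val_eqE /= ffunE avoid.
(* Round [c] to the binary word [y0]; if [c] is not binary, also to [y1], which
   differs from [y0] at a coordinate where [c] is at neither 0 nor 1.  The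
   configuration [c] misses the requests of both, and they are not both in [W]. *)
pose y0 : word := [ffun i => c i == 1 :> nat].
have avoid0 i : (c i : nat) != ~~ y0 i by rewrite ffunE; case: (c i) => -[|[|m]].
have [binary|] := boolP [forall i, c i < 2].
  apply: (missed y0) => //; apply/negP => y0W; apply: not_word; exists y0 => //.
  apply: functional_extensionality_dep => i; apply: val_inj => /=; rewrite ffunE.
  by move/forallP: binary => /(_ i); case: (c i) => -[|[|m]].
rewrite negb_forall => /existsP [i0]; rewrite -leqNgt => c_i0_ge2.
pose y1 : word := [ffun i => (i == i0) || (c i == 1 :> nat)].
have avoid1 i : (c i : nat) != ~~ y1 i.
  rewrite ffunE; have [->|_] := eqVneq i i0; last by case: (c i) => -[|[|m]].
  by move: c_i0_ge2; case: (c i0) => -[|[|m]].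
have hamming01 : hamming y0 y1 = 1.
  rewrite /hamming (bigD1 i0) //= big1 => [|i neq_i]; last by rewrite !ffunE (negbTE neq_i) /= eqxx.
  by rewrite !ffunE eqxx; move: c_i0_ge2; case: (c i0) => -[|[|m]].
have [y0W|] := boolP (y0 \in W); last exact: missed.
have [y1W|] := boolP (y1 \in W); last exact: missed.
by move: (no_adjacent _ _ y0W y1W); rewrite hamming01.
Qed.

Lemma sweep_served (W : {set word}) y :
  y \in W -> forall r, r \in sweep W -> serves (cfg_of_word y) r.
Proof.
move=> yW r /mapP [y']; rewrite mem_enum => y'W ->.
have : y' != y by apply: contraTneq y'W => ->; rewrite inE yW.
case/eqP/ffunP/existsNP => i /eqP neq_i; apply/existsP; exists i.
by rewrite -val_eqE /= ffunE; move: neq_i; case: (y i); case: (y' i).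
Qed.

End WordConfigurations.

Fixpoint bitstrings (m : nat) : seq (seq bool) :=
  if m is m'.+1 then [seq rcons t x | t <- bitstrings m', x <- [:: false; true]] else [:: [::]].

Lemma size_bitstrings m : size (bitstrings m) = 2 ^ m.
Proof. by elim: m => // m IHm; rewrite size_allpairs IHm expnSr. Qed.

Lemma size_in_bitstrings m t : t \in bitstrings m -> size t = m.
Proof.
elim: m t => [|m IHm] t; first by rewrite inE => /eqP ->.
by move=> /allpairsP [[u x] /= [/IHm <- _ ->]]; rewrite size_rcons.
Qed.

Lemma big_bitstringsS (F : seq bool -> nat) m :
  \sum_(t <- bitstrings m.+1) F t = \sum_(t <- bitstrings m) (F (rcons t false) + F (rcons t true)).
Proof. by rewrite big_allpairs_dep; apply: eq_bigr => t _; rewrite big_cons big_seq1. Qed.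

Section Adversary.
Variables (k : nat) (n : 'I_k -> nat) (two_le_n : forall i, 2 <= n i).
Variables (b : nat) (enc : {ffun 'I_b -> bool} -> {ffun 'I_k -> bool}) (D : nat).

Definition extends (p : seq bool) (v : {ffun 'I_b -> bool}) : bool :=
  [forall i : 'I_b, (i < size p) ==> (v i == nth false p i)].

Definition codewords_extending (p : seq bool) : {set {ffun 'I_k -> bool}} :=
  enc @: [set v | extends p v].

(* Bit [j] of [t] is bit [j %% b] of the message of phase [j %/ b];
   [phase_prefix t] holds the bits of the current phase revealed so far. *)
Definition phase_prefix (t : seq bool) : seq bool := drop (b * (size t %/ b)) t.

Definition block (t : seq bool) (x : bool) : seq (cfg n) :=
  flatten (nseq D (sweep two_le_n (codewords_extending (rcons (phase_prefix t) x)))).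

Definition adversary (t : seq bool) : seq (cfg n) :=
  flatten [seq block (take j t) (nth false t j) | j <- iota 0 (size t)].

Lemma adversary_rcons t x : adversary (rcons t x) = adversary t ++ block t x.
Proof.
rewrite /adversary size_rcons -addn1 iotaD map_cat flatten_cat /= cats0 add0n.
rewrite -cats1 take_cat_le // take_size cats1 nth_rcons ltnn eqxx; congr (_ ++ _).
congr flatten; apply/eq_in_map => j; rewrite mem_iota add0n => /andP [_ lt_j].
by rewrite -cats1 take_cat_le ?(ltnW lt_j) // cats1 nth_rcons lt_j.
Qed.

End Adversary.

Section OnlineLowerBound.
Variables (k : nat) (n : 'I_k -> nat) (two_le_n : forall i, 2 <= n i).
Variables (b : nat) (enc : {ffun 'I_b -> bool} -> {ffun 'I_k -> bool}) (D : nat).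
Hypothesis enc_dist : min_distance_ge D enc.
Hypothesis D_gt1_or_b1 : (1 < D) || (b == 1).
Hypothesis b_gt0 : 0 < b.
Variables (start : cfg n) (A : online_alg n).
Hypothesis A_valid : valid_alg A.

Local Notation codewords_extending := (codewords_extending enc).
Local Notation block := (block two_le_n enc D).
Local Notation adversary := (adversary two_le_n enc D).
Local Notation phase_prefix := (phase_prefix b).

Lemma codewords_extending_nonadjacent p : 0 < size p ->
  {in codewords_extending p &, forall y y', hamming y y' != 1}.
Proof.
move=> p_gt0 _ _ /imsetP [v /[!inE] ext_v ->] /imsetP [v' /[!inE] ext_v' ->].
have [<-|neq_vv'] := eqVneq v v'; first by rewrite hammingxx.
case/orP: D_gt1_or_b1 => [D_gt1|/eqP b1].
  by apply/eqP => h1; move: (enc_dist neq_vv'); rewrite h1 leqNgt D_gt1.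
suff : v = v' by move/eqP: neq_vv'.
apply/ffunP => i; have lt_i : i < size p.
  by apply: leq_trans p_gt0; have := ltn_ord i; rewrite [X in _ < X]b1.
move: ext_v ext_v' => /forallP/(_ i)/implyP/(_ lt_i)/eqP ->.
by move=> /forallP/(_ i)/implyP/(_ lt_i)/eqP ->.
Qed.

Lemma size_phase_prefix t : size (phase_prefix t) < b.
Proof. by rewrite size_drop {1}(divn_eq (size t) b) mulnC addKn ltn_pmod. Qed.

Lemma codewords_extending_far p y0 y1 : size p < b ->
  y0 \in codewords_extending (rcons p false) -> y1 \in codewords_extending (rcons p true) ->
  D <= hamming y0 y1.
Proof.
move=> lt_pb /imsetP [v0 /[!inE] ext0 ->] /imsetP [v1 /[!inE] ext1 ->]; apply: enc_dist.
pose i := Ordinal lt_pb; apply/eqP => eq_v01.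
have bit_i v x : extends (rcons p x) v -> v i = x.
  by move/forallP/(_ i); rewrite size_rcons ltnSn nth_rcons ltnn eqxx => /eqP.
by move: (bit_i _ _ ext0); rewrite eq_v01 (bit_i _ _ ext1).
Qed.

Definition block_cost (t : seq bool) (x : bool) : nat :=
  walk_cost (alg_pos start A (adversary t ++ block t x)) (size (adversary t)) (size (block t x)).

Lemma block_cost_cases t x :
  D <= block_cost t x \/
  exists2 y, y \in codewords_extending (rcons (phase_prefix t) x) &
    dist (alg_pos start A (adversary t) (size (adversary t))) (cfg_of_word two_le_n y)
      <= block_cost t x.
Proof.
set I := adversary t; set W := codewords_extending _.
have := @codewords_extending_nonadjacent (rcons (phase_prefix t) x).
rewrite size_rcons => /(_ isT) /(@sweep_missed _ _ two_le_n) missed.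
have served i : i < size (block t x) ->
    serves (alg_pos start A (I ++ block t x) (size I + i).+1) (nth start (block t x) i).
  move=> lt_i; rewrite /alg_pos /= -addnS take_cat ltnNge leq_addr /= addKn.
  by rewrite (take_nth start lt_i) -rcons_cat; apply: A_valid.
pose safe c := exists2 y, y \in W & c = cfg_of_word two_le_n y.
case: (@repeated_sweep_cost _ _ safe _ _ _ _ _ missed served) => [|[_ [y yW ->] le_y]].
  by left.
by right; exists y; rewrite // -(alg_pos_cat _ _ (block t x) (leqnn _)).
Qed.

Lemma block_cost_pair t : D <= block_cost t false + block_cost t true.
Proof.
case: (block_cost_cases t false) => [le0|[y0 y0W le0]]; first exact: leq_trans le0 (leq_addr _ _).
case: (block_cost_cases t true) => [le1|[y1 y1W le1]]; first exact: leq_trans le1 (leq_addl _ _).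
set pos := alg_pos start A (adversary t) (size (adversary t)) in le0 le1.
rewrite (leq_trans (codewords_extending_far (size_phase_prefix t) y0W y1W)) //.
rewrite -(dist_cfg_of_word two_le_n) (leq_trans (dist_triangle _ pos _)) //.
by rewrite distC leq_add.
Qed.

Lemma sum_alg_cost_adversary m :
  m * 2 ^ m * D <= 2 * \sum_(t <- bitstrings m) alg_cost start A (adversary t).
Proof.
elim: m => // m IHm; rewrite big_bitstringsS.
under eq_bigr => t _ do
  rewrite !adversary_rcons !alg_cost_cat -/(block_cost t false) -/(block_cost t true).
apply: (@leq_trans (2 * \sum_(t <- bitstrings m) (2 * alg_cost start A (adversary t) + D))).
  set S := \sum_(t <- bitstrings m) alg_cost start A (adversary t) in IHm *.
  have -> : \sum_(t <- bitstrings m) (2 * alg_cost start A (adversary t) + D) = 2 * S + 2 ^ m * D.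
    by rewrite big_split /= -big_distrr big_const_seq count_predT size_bitstrings iter_addn_0 mulnC.
  by rewrite expnS; nia.
by rewrite leq_mul2l /=; apply: leq_sum => t _; have := block_cost_pair t; lia.
Qed.

End OnlineLowerBound.

Lemma flatten_nseq_const (T : Type) (x : T) (l : seq nat) :
  flatten [seq nseq m x | m <- l] = nseq (sumn l) x.
Proof. by elim: l => //= m l ->; rewrite nseqD. Qed.

Section OfflineCost.
Variables (k : nat) (n : 'I_k -> nat).

Fixpoint cost_from (c : cfg n) (s : seq (cfg n)) : nat :=
  if s is c' :: s' then dist c c' + cost_from c' s' else 0.

Lemma offline_costE start s : offline_cost start s = cost_from start s.
Proof.
suff costE c : \sum_(t < size s) dist (nth start (c :: s) t) (nth start s t) = cost_from c s.
  exact: costE.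
by elim: s c => [|c' s IHs] c; rewrite ?big_ord0 // /= big_ord_recl -IHs.
Qed.

Lemma cost_from_cat c s1 s2 : cost_from c (s1 ++ s2) = cost_from c s1 + cost_from (last c s1) s2.
Proof. by elim: s1 c => [|c' s1 IHs] c //=; rewrite IHs addnA. Qed.

Lemma cost_from_nseq c c' m : cost_from c (nseq m c') <= k.
Proof.
case: m => [|m] //=; have -> : cost_from c' (nseq m c') = 0 by elim: m => //= m ->; rewrite distxx.
by rewrite addn0 dist_le_k.
Qed.

Lemma offline_feasible_blocks start (l : seq (seq (cfg n) * cfg n)) :
  (forall x, x \in l -> forall r, r \in x.1 -> serves x.2 r) ->
  offline_feasible start (flatten (map fst l)) (flatten [seq nseq (size x.1) x.2 | x <- l]).
Proof.
elim: l => [|[B c] l IHl] serve_l; first by split.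
have /IHl [size_l serve_rest] : forall x, x \in l -> forall r, r \in x.1 -> serves x.2 r.
  by move=> x l_x; apply: serve_l; rewrite inE l_x orbT.
rewrite /offline_feasible /= !size_cat size_nseq size_l; split=> // t lt_t.
rewrite !nth_cat size_nseq; case: ltnP => [lt_tB|le_Bt].
  by rewrite nth_nseq lt_tB; apply: (serve_l (B, c)); rewrite ?inE ?eqxx ?mem_nth.
by apply: serve_rest; rewrite -(ltn_add2l (size B)) subnKC.
Qed.

End OfflineCost.

Section OfflineUpperBound.
Variables (k : nat) (n : 'I_k -> nat) (two_le_n : forall i, 2 <= n i).
Variables (b : nat) (enc : {ffun 'I_b -> bool} -> {ffun 'I_k -> bool}) (D : nat).
Hypothesis b_gt0 : 0 < b.
Variable start : cfg n.

Local Notation block := (block two_le_n enc D).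

Definition phase_message (t : seq bool) (ph : nat) : {ffun 'I_b -> bool} :=
  [ffun i : 'I_b => nth false t (ph * b + i)].

Lemma extends_phase_message t j : j < size t ->
  extends (rcons (phase_prefix b (take j t)) (nth false t j)) (phase_message t (j %/ b)).
Proof.
move=> lt_j; have size_prefix : size (phase_prefix b (take j t)) = j %% b.
  by rewrite size_drop size_take lt_j {1}(divn_eq j b) mulnC addKn.
apply/forallP => i; apply/implyP; rewrite size_rcons size_prefix ltnS leq_eqVlt ffunE.
case/predU1P => [-> | lt_i]; first by rewrite nth_rcons size_prefix ltnn eqxx -divn_eq.
rewrite nth_rcons size_prefix lt_i nth_drop nth_take size_take lt_j (mulnC b) //.
by rewrite {2}(divn_eq j b) ltn_add2l.
Qed.

Definition phase_cfg (t : seq bool) (j : nat) : cfg n :=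
  cfg_of_word two_le_n (enc (phase_message t (j %/ b))).

Definition serve_bit (t : seq bool) (j : nat) : seq (cfg n) :=
  nseq (size (block (take j t) (nth false t j))) (phase_cfg t j).

Definition offline_solution (t : seq bool) : seq (cfg n) :=
  flatten [seq serve_bit t j | j <- iota 0 (size t)].

Lemma offline_solution_feasible t :
  offline_feasible start (adversary two_le_n enc D t) (offline_solution t).
Proof.
pose l := [seq (block (take j t) (nth false t j), phase_cfg t j) | j <- iota 0 (size t)].
have -> : adversary two_le_n enc D t = flatten (map fst l) by rewrite /adversary -map_comp.
have -> : offline_solution t = flatten [seq nseq (size x.1) x.2 | x <- l].
  by rewrite /offline_solution -map_comp.
apply: offline_feasible_blocks => _ /mapP [j /[!mem_iota] /andP [_ lt_j] ->] r /= /flattenP [sw].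
rewrite mem_nseq => /andP [_ /eqP ->]; apply: sweep_served; apply/imsetP.
by exists (phase_message t (j %/ b)); rewrite // inE extends_phase_message.
Qed.

(* All configurations of a phase coincide, so the solution moves once per phase. *)
Lemma cost_serve_bits t M :
  cost_from start (flatten [seq serve_bit t j | j <- iota 0 (M * b)]) <= M * k.
Proof.
elim: M => [|M IHM]; first by rewrite mul0n.
rewrite mulSnr iotaD map_cat flatten_cat cost_from_cat add0n mulSnr leq_add //.
have -> : flatten [seq serve_bit t j | j <- iota (M * b) b] =
    flatten [seq nseq m (phase_cfg t (M * b))
            | m <- [seq size (block (take j t) (nth false t j)) | j <- iota (M * b) b]].
  rewrite -map_comp; congr flatten; apply/eq_in_map => j /[!mem_iota] /andP [le_j lt_j] /=.
  rewrite /serve_bit /phase_cfg mulnK // (_ : j %/ b = M) //.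
  by rewrite -(subnKC le_j) divnMDl // divn_small ?addn0; lia.
by rewrite flatten_nseq_const cost_from_nseq.
Qed.

Lemma offline_solution_cost t M :
  size t = M * b -> offline_cost start (offline_solution t) <= M * k.
Proof. by move=> size_t; rewrite offline_costE /offline_solution size_t cost_serve_bits. Qed.

End OfflineUpperBound.

From mathcomp Require Import classical_sets reals ereal measure lebesgue_measure.
From mathcomp Require Import lebesgue_integral probability measurable_realfun.
Local Open Scope ring_scope.

Lemma le_of_natmul_le (R : realType) (x y g : R) :
  (forall M : nat, M%:R * x <= M%:R * y + g) -> x <= y.
Proof.
move=> le_xy; rewrite leNgt; apply/negP => lt_yx.
have gap : 0 < x - y by rewrite subr_gt0.
pose M := Num.Def.archi_bound (`|g| / (x - y)).
have : `|g| / (x - y) < M%:R by apply: archi_boundP; rewrite divr_ge0 // ltW.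
rewrite ltr_pdivrMr // mulrBr; have := le_xy M; have := ler_norm g; lra.
Qed.

Lemma OPT_ge0 (R : realType) k (n : 'I_k -> nat) (start : cfg n) I s :
  offline_feasible start I s -> 0 <= OPT R start I.
Proof.
move=> feas_s; apply: lb_le_inf; first by exists (offline_cost start s)%:R, s.
by move=> _ [s' [_ ->]].
Qed.

Lemma OPT_le_offline_cost (R : realType) k (n : 'I_k -> nat) (start : cfg n) I s :
  offline_feasible start I s -> OPT R start I <= (offline_cost start s)%:R.
Proof. by move=> feas_s; apply: ge_inf; [exists 0 => _ [s' [_ ->]] | exists s]. Qed.

Section RandomizedLowerBound.
Variables (R : realType) (d : measure_display) (Omega : measurableType d) (P : probability Omega R).
Variables (k : nat) (n : 'I_k -> nat) (two_le_n : forall i, (2 <= n i)%N).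
Variables (b : nat) (enc : {ffun 'I_b -> bool} -> {ffun 'I_k -> bool}) (D : nat).
Hypothesis enc_dist : min_distance_ge D enc.
Hypothesis D_gt1_or_b1 : (1 < D)%N || (b == 1)%N.
Hypothesis b_gt0 : (0 < b)%N.
Variables (start : cfg n) (A : Omega -> online_alg n).
Hypothesis A_randomized : randomized_alg P A start.

Local Notation adversary := (adversary two_le_n enc D).
Local Notation expected_cost I := (\int[P]_w ((alg_cost start (A w) I)%:R : R)%:E)%E.

Lemma sum_expected_cost_adversary m :
  (((m * 2 ^ m * D)%:R / 2 : R)%:E <= \sum_(t <- bitstrings m) expected_cost (adversary t))%E.
Proof.
have [A_valid A_meas] := A_randomized.
have cost_meas t : measurable_fun setT (fun w => ((alg_cost start (A w) (adversary t))%:R : R)%:E).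
  exact/measurable_EFinP/A_meas.
have cost_ge0 t w : setT w -> (0 <= ((alg_cost start (A w) (adversary t))%:R : R)%:E)%E.
  by rewrite lee_fin ler0n.
rewrite -(ge0_integral_sum _ measurableT cost_meas cost_ge0).
rewrite -[X in (X <= _)%E]mule1 -(probability_setT P) -integral_cst //.
apply: ge0_le_integral => //.
- by move=> w _; rewrite lee_fin divr_ge0 ?ler0n.
- exact: emeasurable_sum.
move=> w _; rewrite sumEFin lee_fin -natr_sum ler_pdivrMr // -natrM ler_nat (mulnC _ 2).
exact: sum_alg_cost_adversary.
Qed.

Lemma competitive_ratio_lower_bound beta : competitive P A start beta -> (0 < D)%N ->
  (b * D)%:R <= 2 * beta * k%:R.
Proof.
move=> [gamma competitive_A] D_gt0; set beta' := Num.max beta 0.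
suff le_bD : (b * D)%:R <= 2 * beta' * k%:R.
  have bD_gt0 : 0 < (b * D)%:R :> R by rewrite ltr0n muln_gt0 b_gt0 D_gt0.
  have [ge0_beta|lt_beta0] := leP 0 beta; first by rewrite /beta' (max_l ge0_beta) in le_bD.
  move: (lt_le_trans bD_gt0 le_bD).
  by rewrite /beta' (max_r (ltW lt_beta0)) mulr0 mul0r ltxx.
apply: (@le_of_natmul_le _ _ _ (2 * gamma)) => M.
have expected_le t : t \in bitstrings (M * b) ->
    (expected_cost (adversary t) <= (beta' * (M * k)%:R + gamma)%:E)%E.
  move=> /size_in_bitstrings size_t; apply: le_trans (competitive_A _) _; rewrite lee_fin lerD2r.
  have feas := offline_solution_feasible two_le_n enc D start t.
  have [beta'_ge0 beta'_ge_beta] : 0 <= beta' /\ beta <= beta' by rewrite !le_max !lexx orbT.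
  apply: le_trans (ler_wpM2r (OPT_ge0 R feas) beta'_ge_beta) (ler_wpM2l beta'_ge0 _).
  by apply: le_trans (OPT_le_offline_cost R feas) _; rewrite ler_nat offline_solution_cost.
have le_sum : (\sum_(t <- bitstrings (M * b)) expected_cost (adversary t) <=
    \sum_(t <- bitstrings (M * b)) (beta' * (M * k)%:R + gamma)%:E)%E.
  by rewrite big_seq_cond [X in (_ <= X)%E]big_seq_cond; apply: lee_sum => t /andP [/expected_le].
have := le_trans (sum_expected_cost_adversary (M * b)) le_sum.
rewrite sumEFin lee_fin big_const_seq count_predT size_bitstrings iter_addr addr0 -mulr_natr.
have : 0 < (2 ^ (M * b))%:R :> R by rewrite ltr0n expn_gt0.
rewrite !natrM; nra.
Qed.

End RandomizedLowerBound.

Theorem theorem9 (R : realType) :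
  exists c : R, 0 < c /\
  forall (k : nat) (n : 'I_k -> nat), (1 <= k)%N ->
  (forall i, (2 <= n i)%N) ->
  forall (start : cfg n) (d : measure_display) (Omega : measurableType d)
         (P : probability Omega R) (A : Omega -> online_alg n) (beta : R),
  randomized_alg P A start ->
  competitive P A start beta ->
  c * k%:R <= beta.
Proof.
exists 4608^-1; split; first by rewrite invr_gt0 ltr0n.
move=> k n k_gt0 two_le_n start d Omega P A beta A_randomized A_competitive.
have [b [D [enc [b_gt0 D_gt1_or_b1 enc_dist le_kk]]]] := good_code_exists k_gt0.
have D_gt0 : (0 < D)%N by nia.
have le_bD := competitive_ratio_lower_bound two_le_n enc_dist D_gt1_or_b1 b_gt0
  A_randomized A_competitive D_gt0.
have k_gt0' : 0 < k%:R :> R by rewrite ltr0n.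
rewrite mulrC ler_pdivrMr ?ltr0n //; move: le_kk le_bD; rewrite -(ler_nat R) !natrM; nra.
Qed.
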